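(* Let $l\in\mathbb N-\frac12$. There is a unique homomorphism of associative algebras $\Phi_l:U(\tilde{\mathfrak g}^{(l)})\to U(\tilde{\mathcal H}^{(l)})_{(z)}$ which restricts to the identity on $U(\tilde{\mathcal H}^{(l)})$ and satisfies $$\Phi_l(e)=E:=\frac{1}{z}\sum_{k=1}^{2l}(-1)^{k+l+\frac12}\frac{l-k}{(k-1)!(2l-k)!}\,p_{k-1}p_{2l-k},$$ $$\Phi_l(f)=F:=\frac{1}{z}\sum_{k=1}^{2l}(-1)^{k+l-\frac12}\frac{l-k}{(k-1)!(2l-k)!}\,p_{k}p_{2l-k+1},$$ $$\Phi_l(h)=H:=\frac{2}{z}\sum_{k=0}^{l-\frac12}(-1)^{k+l-\frac12}\frac{l-k}{k!(2l-k)!}\,p_{2l-k}p_k-\frac{(l+\frac12)^2}{2}.$$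
   Context: For $l\in\mathbb N-\frac12=\{\frac12,\frac32,\dots\}$, $\tilde{\mathfrak g}^{(l)}$ is the complex Lie algebra with basis $e,h,f,p_0,\dots,p_{2l},z$ and brackets $[h,e]=2e$, $[h,f]=-2f$, $[e,f]=h$, $[h,p_k]=2(l-k)p_k$, $[e,p_k]=kp_{k-1}$, $[f,p_k]=(2l-k)p_{k+1}$ (with $p_{-1}=p_{2l+1}=0$), $z$ central, and $[p_k,p_{k'}]=\delta_{k+k',2l}(-1)^{k+l+\frac12}k!(2l-k)!\,z$ for $k,k'=0,\dots,2l$. $\tilde{\mathcal H}^{(l)}=\mathrm{span}\{p_0,\dots,p_{2l},z\}$ is its Heisenberg subalgebra. $U(\cdot)$ denotes the universal enveloping algebra, and $U(\tilde{\mathcal H}^{(l)})_{(z)}$ is the localization of $U(\tilde{\mathcal H}^{(l)})$ at the multiplicative set $\{z^i: i\ge 0\}$ ($z$ is central, so this is an Ore localization). *)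

From HB Require Import structures.
From mathcomp Require Import all_boot all_order all_algebra.
Set Implicit Arguments. Unset Strict Implicit. Unset Printing Implicit Defensive.
Import GRing.Theory.
Local Open Scope ring_scope.

(* Throughout, l = m + 1/2 with m : nat, so 2l = 2m+1 =: (N m) and the
   Heisenberg generators are p_0, ..., p_(N m).  Signs:
   (-1)^(k+l+1/2) = (-1)^(k+m+1),  (-1)^(k+l-1/2) = (-1)^(k+m). *)
Definition N (m : nat) : nat := (2 * m).+1.

Section Defs.
Variable K : fieldType.

Definition comm {A : algType K} (x y : A) : A := x * y - y * x.

Definition alg_hom {A B : algType K} (f : A -> B) : Prop :=
  (forall (a : K) (x y : A), f (a *: x + y) = a *: f x + f y) /\
  f 1 = 1 /\ (forall x y : A, f (x * y) = f x * f y).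

Definition inv_of {A : algType K} (x w : A) : Prop := x * w = 1 /\ w * x = 1.

(* bracket constant: [p_k, p_k'] = heis_c m k k' * z *)
Definition heis_c (m k k' : nat) : K :=
  if k + k' == N m then (-1) ^+ (k + m).+1 * (k`! * (N m - k)`!)%:R else 0.

Definition heis_rel (m : nat) {A : algType K} (p : nat -> A) (z : A) : Prop :=
  (forall k, (k <= N m)%N -> comm z (p k) = 0) /\
  (forall k k', (k <= N m)%N -> (k' <= N m)%N ->
      comm (p k) (p k') = heis_c m k k' *: z).

Definition g_rel (m : nat) {A : algType K} (e h f : A) (p : nat -> A) (z : A)
  : Prop :=
  heis_rel m p z /\
  comm h e = e *+ 2 /\ comm h f = - (f *+ 2) /\ comm e f = h /\
  comm z e = 0 /\ comm z h = 0 /\ comm z f = 0 /\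
  (forall k, (k <= N m)%N ->
     comm h (p k) = ((N m)%:R - (2 * k)%:R) *: p k /\
     comm e (p k) = k%:R *: p k.-1 /\
     comm f (p k) = (N m - k)%:R *: p k.+1).

(* (U, e,h,f,p,z) is a universal enveloping algebra of g~^(l):
   the associative K-algebra generated by the basis subject to
   xy - yx = [x,y]  (universal property). *)
Definition is_Ug (m : nat) (U : algType K) (e h f : U) (p : nat -> U) (z : U)
  : Prop :=
  g_rel m e h f p z /\
  forall (A : algType K) (e' h' f' : A) (p' : nat -> A) (z' : A),
    g_rel m e' h' f' p' z' ->
    (exists phi : U -> A, alg_hom phi /\ phi e = e' /\ phi h = h' /\
        phi f = f' /\ phi z = z' /\ (forall k, (k <= N m)%N -> phi (p k) = p' k))
    /\
    (forall phi psi : U -> A, alg_hom phi -> alg_hom psi ->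
        phi e = psi e -> phi h = psi h -> phi f = psi f -> phi z = psi z ->
        (forall k, (k <= N m)%N -> phi (p k) = psi (p k)) ->
        forall x, phi x = psi x).

Definition is_UH (m : nat) (V : algType K) (p : nat -> V) (z : V) : Prop :=
  heis_rel m p z /\
  forall (A : algType K) (p' : nat -> A) (z' : A),
    heis_rel m p' z' ->
    (exists phi : V -> A, alg_hom phi /\ phi z = z' /\
        (forall k, (k <= N m)%N -> phi (p k) = p' k))
    /\
    (forall phi psi : V -> A, alg_hom phi -> alg_hom psi ->
        phi z = psi z -> (forall k, (k <= N m)%N -> phi (p k) = psi (p k)) ->
        forall x, phi x = psi x).

Definition is_loc (V L : algType K) (z : V) (j : V -> L) : Prop :=
  alg_hom j /\ (exists w, inv_of (j z) w) /\
  forall (A : algType K) (psi : V -> A), alg_hom psi ->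
    (exists w, inv_of (psi z) w) ->
    (exists phi : L -> A, alg_hom phi /\ forall x, phi (j x) = psi x) /\
    (forall phi phi' : L -> A, alg_hom phi -> alg_hom phi' ->
        (forall x, phi (j x) = psi x) -> (forall x, phi' (j x) = psi x) ->
        forall y, phi y = phi' y).

(* The elements E, F, H of the localization, given q k = image of p_k
   and winv = z^{-1}.  Note l - k = (2l - 2k)/2 and (l + 1/2) = m + 1. *)
Definition lmk (m k : nat) : K := ((N m)%:R - (2 * k)%:R) / 2%:R.

Definition elE (m : nat) {L : algType K} (q : nat -> L) (winv : L) : L :=
  winv * \sum_(1 <= k < (N m).+1)
    (((-1) ^+ (k + m).+1 * lmk m k / ((k.-1)`! * (N m - k)`!)%:R)
       *: (q k.-1 * q (N m - k)%N)).

Definition elF (m : nat) {L : algType K} (q : nat -> L) (winv : L) : L :=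
  winv * \sum_(1 <= k < (N m).+1)
    (((-1) ^+ (k + m) * lmk m k / ((k.-1)`! * (N m - k)`!)%:R)
       *: (q k * q (N m - k).+1)).

Definition elH (m : nat) {L : algType K} (q : nat -> L) (winv : L) : L :=
  (2%:R : K) *: (winv * \sum_(0 <= k < m.+1)
    (((-1) ^+ (k + m) * lmk m k / (k`! * (N m - k)`!)%:R)
       *: (q (N m - k)%N * q k)))
  - (((m.+1 ^ 2)%:R / 2%:R : K) *: 1).

End Defs.

From mathcomp Require Import all_boot all_order all_algebra.
From mathcomp Require Import ring zify.
Set Implicit Arguments. Unset Strict Implicit. Unset Printing Implicit Defensive.
Import GRing.Theory.
Local Open Scope ring_scope.

(* Write l = m + 1/2, N = 2l = 2m+1, and let q_k, z be the images of the
   Heisenberg generators in the localization, with w = z^-1.  By the universal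
   properties of U(g~^(l)) and of U(H~^(l)) the theorem reduces to one fact:
   the elements E, H, F of the localization, together with the q_k and z,
   satisfy the defining relations of g~^(l).

   E, F and the non-constant part of H are "quadratic elements"
   w * sum_k s_k q_(f k) q_(g k).  Since w is central in the subalgebra
   generated by the q_k, commutators with such elements are computed by the
   Leibniz rule (quad_derivation), and brackets [X, q_i] collapse to one or
   two terms by the Heisenberg relations (quad_comm_q).  Each relation thus
   reduces to an identity between rational numbers involving factorials and
   signs, proved in characteristic 0 (section Coefficients):
   - [E, q_i], [F, q_i], [H, q_i] and the centrality of z follow directly;
   - [H, E] = 2E and [H, F] = -2F because H acts diagonally on the q_a with
     weights 2l - 2a (quad_eigen);
   - [E, F] = H is the main computation: [E, F] is a sum over the products
     q_i q_(N-i); reordering its upper half gives the quadratic part of H and,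
     through the Heisenberg relations, the constant -(l + 1/2)^2 / 2. *)

Section Commutator.
Variables (K : fieldType) (A : algType K).
Implicit Types (x y u : A) (a : K).

Lemma commN x y : comm x y = - comm y x.
Proof. by rewrite /comm opprB. Qed.

Lemma comm_mulr x y u : comm x (y * u) = comm x y * u + y * comm x u.
Proof. by rewrite /comm mulrBl mulrBr !mulrA addrA addrNK. Qed.

Lemma comm_scaler x a y : comm x (a *: y) = a *: comm x y.
Proof. by rewrite /comm -scalerAl -scalerAr scalerBr. Qed.

Lemma comm_scalel x a y : comm (a *: y) x = a *: comm y x.
Proof. by rewrite /comm -scalerAl -scalerAr scalerBr. Qed.

Lemma comm_subl x y u : comm (y - u) x = comm y x - comm u x.
Proof. by rewrite /comm mulrBl mulrBr !opprB addrACA [RHS]addrACA [- (x * y) + _]addrC. Qed.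

Lemma comm_subr x y u : comm x (y - u) = comm x y - comm x u.
Proof. by rewrite /comm mulrBl mulrBr !opprB addrACA [RHS]addrACA [- (y * x) + _]addrC. Qed.

Lemma comm_scale1l x a : comm (a *: 1) x = 0.
Proof. by rewrite comm_scalel /comm mul1r mulr1 subrr scaler0. Qed.

Lemma comm_scale1r x a : comm x (a *: 1) = 0.
Proof. by rewrite commN comm_scale1l oppr0. Qed.

Lemma comm_sumr x (r1 r2 : nat) (F : nat -> A) :
  comm x (\sum_(r1 <= k < r2) F k) = \sum_(r1 <= k < r2) comm x (F k).
Proof. by rewrite /comm mulr_suml mulr_sumr -sumrB. Qed.

Lemma comm_eq0 x y : comm x y = 0 -> x * y = y * x.
Proof. by move/eqP; rewrite subr_eq0 => /eqP. Qed.

Lemma comm_inv z w x : z * w = 1 -> w * z = 1 -> comm z x = 0 -> comm w x = 0.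
Proof.
move=> zw wz /comm_eq0 zx; apply/eqP; rewrite subr_eq0; apply/eqP.
by rewrite -[w * x]mulr1 -zw mulrA -(mulrA w) -zx mulrA wz mul1r.
Qed.
End Commutator.

Section AlgebraHomomorphisms.
Variables (K : fieldType) (A B : algType K) (f : A -> B).
Hypothesis hf : alg_hom f.

Lemma alg_hom0 : f 0 = 0.
Proof.
by have := hf.1 1 0 0; rewrite !scale1r addr0 => h; apply/(addrI (f 0)); rewrite addr0 -h.
Qed.

Lemma alg_homZ a x : f (a *: x) = a *: f x.
Proof. by have := hf.1 a x 0; rewrite addr0 alg_hom0 addr0. Qed.

Lemma alg_hom_comm x y : f (comm x y) = comm (f x) (f y).
Proof. by rewrite /comm [_ - _]addrC -scaleN1r hf.1 !hf.2.2 scaleN1r addrC. Qed.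

Lemma heis_rel_map m (p : nat -> A) z :
  heis_rel m p z -> heis_rel m (fun k => f (p k)) (f z).
Proof.
case=> hz hp; split=> [k hk | k k' hk hk'].
- by rewrite -alg_hom_comm hz // alg_hom0.
- by rewrite -alg_hom_comm hp // alg_homZ.
Qed.
End AlgebraHomomorphisms.

Lemma alg_hom_comp (K : fieldType) (A B C : algType K) (f : A -> B) (g : B -> C) :
  alg_hom f -> alg_hom g -> alg_hom (fun x => g (f x)).
Proof.
move=> [f1 [f2 f3]] [g1 [g2 g3]]; split; last split.
- by move=> a x y; rewrite f1 g1.
- by rewrite f2 g2.
- by move=> x y; rewrite f3 g3.
Qed.

(* Coefficients of q_(k-1) q_(2l-k) in z E, of q_k q_(2l-k+1) in z F
   (k = 1..2l), and of q_(2l-k) q_k in z (H + (l+1/2)^2/2) / 2 (k = 0..l-1/2). *)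
Definition Ecoef (K : fieldType) (m k : nat) : K :=
  (-1) ^+ (k + m).+1 * lmk K m k / ((k.-1)`! * (N m - k)`!)%:R.
Definition Fcoef (K : fieldType) (m k : nat) : K :=
  (-1) ^+ (k + m) * lmk K m k / ((k.-1)`! * (N m - k)`!)%:R.
Definition Hcoef (K : fieldType) (m k : nat) : K :=
  (-1) ^+ (k + m) * lmk K m k / (k`! * (N m - k)`!)%:R.

(* Coefficient of w * q_k q_(2l-k) in [E, F], before symmetrization. *)
Definition EFcoef (K : fieldType) (m k : nat) : K :=
  (if (k < N m)%N then Fcoef K m k.+1 * k.+1%:R else 0) +
  (if (0 < k)%N then Fcoef K m k * (N m - k).+1%:R else 0).

(* Closed form of the quadratic sum giving the constant term of [E, F]. *)
Lemma sum_quadratic (R : comPzRingType) (x : R) n :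
  \sum_(0 <= k < n) (2 * k.+1%:R * (x - k%:R) - (x - 2 * k%:R) ^+ 2) =
  - 2 * n%:R ^+ 3 + (3 * x + 2) * n%:R ^+ 2 - (x ^+ 2 + x) * n%:R.
Proof.
elim: n => [|n IH]; first by rewrite big_geq //; ring.
by rewrite big_nat_recr //= IH -!natr1; ring.
Qed.

(* Scalar identities between the coefficients; they hold in characteristic 0,
   where the factorials and 2 appearing as denominators are invertible. *)
Section Coefficients.
Variables (K : fieldType) (m : nat).
Hypothesis HK : [pchar K] =i pred0.

Lemma natf_neq0 n : (0 < n)%N -> n%:R != 0 :> K.
Proof. by rewrite ((pcharf0P K).1 HK) -lt0n. Qed.

Lemma factf_neq0 n : n`!%:R != 0 :> K.
Proof. exact/natf_neq0/fact_gt0. Qed.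

Lemma heis_c_compl i j : (i + j = N m)%N ->
  heis_c K m i j = - (-1) ^+ (i + m) * (i`! * j`!)%:R.
Proof.
move=> h; rewrite /heis_c (_ : N m - i = j)%N; last by lia.
by rewrite (_ : i + j == N m) ?exprS ?mulN1r //; apply/eqP.
Qed.

(* Since 2l is odd, complementary indices carry opposite signs. *)
Lemma sign_compl i j : (i + j = N m)%N -> (-1) ^+ (j + m) = - (-1) ^+ (i + m) :> K.
Proof.
move=> h; have : odd ((i + m) + (j + m)).
  by rewrite (_ : (i + m) + (j + m) = (m + m).*2.+1)%N /= ?odd_double //; rewrite /N in h; lia.
rewrite oddD -signr_odd -[in RHS]signr_odd.
by case: (odd (i + m)); case: (odd (j + m)); rewrite //= ?opprK.
Qed.

(* The coefficient identities below are identities between rational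
   functions of i, j, i! and j!, once every sign is written as +-(-1)^(i+m);
   this tactic splits on the parity of i + m and calls [field]. *)
Local Ltac sign_field :=
  rewrite -signr_odd; case: odd; rewrite /= ?expr0 ?expr1 ?factS !natrM ?natrD;
  field; by rewrite ?nat1r ?natr1 ?factf_neq0 ?natf_neq0.

(* The two terms of E contributing to [E, q_(i+1)] = (i+1) q_i. *)
Lemma Ecoef_dual i j : (i.+1 + j = N m)%N ->
  (Ecoef K m i.+1 + Ecoef K m j.+1) * heis_c K m j i.+1 = i.+1%:R.
Proof.
move=> h; rewrite heis_c_compl /Ecoef /lmk; last by lia.
have [-> ->] : (N m - i.+1 = j /\ N m - j.+1 = i)%N by lia.
by rewrite !addSn !exprS (sign_compl h) addSn exprS -h; sign_field.
Qed.

(* The two terms of F contributing to [F, q_i] = (2l-i) q_(i+1). *)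
Lemma Fcoef_dual i j : (i.+1 + j = N m)%N ->
  (Fcoef K m i.+1 + Fcoef K m j.+1) * heis_c K m j.+1 i = j.+1%:R.
Proof.
move=> h; rewrite heis_c_compl /Fcoef /lmk; last by lia.
have [-> ->] : (N m - i.+1 = j /\ N m - j.+1 = i)%N by lia.
by rewrite !addSn !exprS (sign_compl h) addSn exprS -h; sign_field.
Qed.

(* The term of H contributing to [H, q_i] = (2l-2i) q_i, for i <= l-1/2
   (the term q_(2l-i) q_i) and for i > l-1/2 (the term q_i q_(2l-i)). *)
Lemma Hcoef_low i j : (i + j = N m)%N ->
  2 * (Hcoef K m i * heis_c K m j i) = (N m)%:R - (2 * i)%:R.
Proof.
move=> h; rewrite heis_c_compl /Hcoef /lmk; last by lia.
rewrite (_ : N m - i = j)%N; last by lia.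
by rewrite (sign_compl h) -h; sign_field.
Qed.

Lemma Hcoef_high i j : (i + j = N m)%N ->
  2 * (Hcoef K m j * heis_c K m j i) = (N m)%:R - (2 * i)%:R.
Proof.
move=> h; rewrite heis_c_compl /Hcoef /lmk; last by lia.
rewrite (_ : N m - j = i)%N; last by lia.
by rewrite (sign_compl h) -h; sign_field.
Qed.

Lemma EFcoef_closed k j : (k + j = N m)%N ->
  EFcoef K m k = (-1) ^+ (k + m) * (2 * k.+1%:R * j%:R - (j%:R - k%:R) ^+ 2)
                 / (2 * (k`! * j`!)%:R).
Proof.
rewrite /EFcoef /Fcoef /lmk; case: k => [|k]; case: j => [|j] h //.
- have [-> ->] : (0 < N m /\ N m - 1 = j)%N by lia.
  by rewrite /= addr0 -h !add0n add1n exprS; sign_field.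
- have [-> ->] : ((k.+1 < N m) = false /\ N m - k.+1 = 0)%N by lia.
  by rewrite /= add0r -h addn0; sign_field.
- have [-> [-> ->]] : (k.+1 < N m /\ N m - k.+2 = j /\ N m - k.+1 = j.+1)%N by lia.
  by rewrite /= !addSn exprS -h; sign_field.
Qed.

(* Symmetrizing the coefficients of [E, F] gives those of H. *)
Lemma EFcoef_pair k j : (k + j = N m)%N ->
  EFcoef K m k + EFcoef K m j = 2 * Hcoef K m k.
Proof.
move=> h; have h' : (j + k = N m)%N by rewrite addnC.
rewrite (EFcoef_closed h) (EFcoef_closed h').
rewrite /Hcoef /lmk (_ : N m - k = j)%N; last by lia.
by rewrite (sign_compl h) -h; sign_field.
Qed.

(* The constant produced by the symmetrization is -(l+1/2)^2/2. *)
Lemma EFcoef_central :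
  \sum_(0 <= k < m.+1) EFcoef K m k * heis_c K m k (N m - k) = - ((m.+1 ^ 2)%:R / 2).
Proof.
have term k : (0 <= k < m.+1)%N -> EFcoef K m k * heis_c K m k (N m - k) =
    - (2 * k.+1%:R * ((N m)%:R - k%:R) - ((N m)%:R - 2 * k%:R) ^+ 2) / 2.
  case/andP=> _ hk; have h : (k + (N m - k) = N m)%N by rewrite /N; lia.
  rewrite (EFcoef_closed h) (heis_c_compl h) natrB; last by rewrite /N; lia.
  by sign_field.
rewrite (eq_big_nat _ _ term) -mulr_suml sumrN sum_quadratic /N.
by rewrite natrX -!natr1 !natrM; field; rewrite ?natf_neq0.
Qed.
End Coefficients.

Lemma sum_nat_single (V : zmodType) r1 r2 k0 (G : nat -> V) :
  (forall k, (r1 <= k < r2)%N -> k != k0 -> G k = 0) ->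
  \sum_(r1 <= k < r2) G k = if (r1 <= k0 < r2)%N then G k0 else 0.
Proof.
move=> h; rewrite -(big_nat1_eq +%R G k0 r1 r2) big_mkcond /=.
by apply: eq_big_nat => k hk; case: eqP => // /eqP ne; rewrite h.
Qed.

Lemma sum_shift_collect (K : fieldType) (V : lmodType K) n (al be : nat -> K)
    (T : nat -> V) :
  \sum_(1 <= k < n.+1) (al k.-1 *: T k.-1 + be k *: T k) =
  \sum_(0 <= i < n.+1)
     ((if (i < n)%N then al i else 0) + (if (0 < i)%N then be i else 0)) *: T i.
Proof.
rewrite big_split /=; under [RHS]eq_bigr do rewrite scalerDl; rewrite big_split /=.
congr (_ + _).
  rewrite big_add1 /= big_nat_recr //= ltnn scale0r addr0.
  by apply: eq_big_nat => i /andP[_ hi]; rewrite hi.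
by rewrite big_add1 /= big_nat_recl //= scale0r add0r.
Qed.

Lemma sum_upper_half (V : zmodType) m (F : nat -> V) :
  \sum_(m.+1 <= i < (N m).+1) F i = \sum_(0 <= k < m.+1) F (N m - k)%N.
Proof.
rewrite big_nat_rev (big_addn 0 _ m.+1) (_ : (N m).+1 - m.+1 = m.+1)%N; last by rewrite /N; lia.
by apply: eq_big_nat => k /andP[_ hk]; congr F; rewrite /N; lia.
Qed.

Section QuadraticElements.
Variables (K : fieldType) (m : nat) (L : algType K) (q : nat -> L) (z w : L).
Hypotheses (Hq : heis_rel m q z) (zw : z * w = 1) (wz : w * z = 1).

Definition quad r1 r2 (s : nat -> K) (f g : nat -> nat) : L :=
  w * \sum_(r1 <= k < r2) s k *: (q (f k) * q (g k)).

Lemma w_comm_q a : (a <= N m)%N -> comm w (q a) = 0.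
Proof. by move=> ha; apply: comm_inv zw wz (Hq.1 a ha). Qed.

Lemma quad_derivation y (phi : nat -> L) r1 r2 s f g :
  comm y w = 0 -> (forall a, (a <= N m)%N -> comm y (q a) = phi a) ->
  (forall k, (r1 <= k < r2)%N -> (f k <= N m)%N /\ (g k <= N m)%N) ->
  comm y (quad r1 r2 s f g) =
  w * \sum_(r1 <= k < r2) s k *: (phi (f k) * q (g k) + q (f k) * phi (g k)).
Proof.
move=> yw yq hfg; rewrite /quad comm_mulr yw mul0r add0r comm_sumr.
congr (_ * _); apply: eq_big_nat => k /hfg[hf hg].
by rewrite comm_scaler comm_mulr !yq.
Qed.

Lemma quad_central y r1 r2 s f g :
  comm y w = 0 -> (forall a, (a <= N m)%N -> comm y (q a) = 0) ->
  (forall k, (r1 <= k < r2)%N -> (f k <= N m)%N /\ (g k <= N m)%N) ->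
  comm y (quad r1 r2 s f g) = 0.
Proof.
move=> yw yq hfg; rewrite (quad_derivation _ yw yq hfg) big1 ?mulr0 // => k _.
by rewrite mul0r mulr0 addr0 scaler0.
Qed.

Lemma quad_eigen y (lam : nat -> K) (mu : K) r1 r2 s f g :
  comm y w = 0 -> (forall a, (a <= N m)%N -> comm y (q a) = lam a *: q a) ->
  (forall k, (r1 <= k < r2)%N -> [/\ (f k <= N m)%N, (g k <= N m)%N &
                                     lam (f k) + lam (g k) = mu]) ->
  comm y (quad r1 r2 s f g) = mu *: quad r1 r2 s f g.
Proof.
move=> yw yq hfg; rewrite (quad_derivation _ yw yq); last by move=> k /hfg[].
rewrite /quad scalerAr scaler_sumr; congr (_ * _); apply: eq_big_nat => k /hfg[_ _ <-].
by rewrite -scalerAl -scalerAr -scalerDl !scalerA mulrC.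
Qed.

Lemma quad_comm_q r1 r2 s f g i : (i <= N m)%N ->
  (forall k, (r1 <= k < r2)%N -> (f k <= N m)%N /\ (g k <= N m)%N) ->
  comm (quad r1 r2 s f g) (q i) =
  \sum_(r1 <= k < r2) (s k * heis_c K m (g k) i) *: q (f k) +
  \sum_(r1 <= k < r2) (s k * heis_c K m (f k) i) *: q (g k).
Proof.
move=> hi hfg; rewrite commN (@quad_derivation _ (fun a => - (heis_c K m a i *: z))) //.
- rewrite -big_split /= mulr_sumr -sumrN; apply: eq_big_nat => k /hfg[hf hg].
  rewrite mulNr mulrN -opprD scalerN mulrN opprK scalerDr mulrDr.
  rewrite -!scalerAl -!scalerAr -(comm_eq0 (Hq.1 _ hf)) !scalerA !mulrA wz !mul1r.
  by rewrite addrC.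
- by rewrite commN w_comm_q // oppr0.
- by move=> a ha; rewrite commN Hq.2.
Qed.
End QuadraticElements.

Lemma heis_c_off (K : fieldType) m a b : (a + b != N m)%N -> heis_c K m a b = 0.
Proof. by move=> h; rewrite /heis_c ifF //; apply/negbTE. Qed.

Lemma weight_sum (R : comPzRingType) n a b :
  (n%:R - (2 * a)%:R) + (n%:R - (2 * b)%:R) = 2 * n%:R - 2 * (a + b)%:R :> R.
Proof. by rewrite !natrM natrD; ring. Qed.

Section Realization.
Variables (K : fieldType) (m : nat) (L : algType K) (q : nat -> L) (z w : L).
Hypothesis HK : [pchar K] =i pred0.
Hypotheses (Hq : heis_rel m q z) (zw : z * w = 1) (wz : w * z = 1).
Local Notation NN := (N m).
Local Notation E := (elE m q w).
Local Notation F := (elF m q w).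
Local Notation H := (elH m q w).

Lemma elE_quad : E = quad q w 1 NN.+1 (Ecoef K m) predn (fun k => NN - k)%N.
Proof. by []. Qed.

Lemma elF_quad : F = quad q w 1 NN.+1 (Fcoef K m) id (fun k => (NN - k).+1)%N.
Proof. by []. Qed.

Lemma elH_quad : H = 2 *: quad q w 0 m.+1 (Hcoef K m) (fun k => NN - k)%N id
                     - ((m.+1 ^ 2)%:R / 2) *: 1.
Proof. by []. Qed.

Lemma scale_heis_off (s : K) (v : L) a b :
  (a + b != NN)%N -> (s * heis_c K m a b) *: v = 0.
Proof. by move=> h; rewrite heis_c_off // mulr0 scale0r. Qed.

Lemma E_q i : (i <= NN)%N -> comm E (q i) = i%:R *: q i.-1.
Proof.
move=> hi; rewrite elE_quad (quad_comm_q Hq zw wz) //; last by move=> k /andP[]; lia.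
rewrite (@sum_nat_single _ _ _ i) ?(@sum_nat_single _ _ _ (NN.+1 - i)%N);
  try by move=> k /andP[? ?] ?; apply: scale_heis_off; lia.
case: i hi => [|i] hi; first by rewrite ifF ?scale0r ?addr0 //; lia.
have [j hj] : exists j, (i.+1 + j = NN)%N by exists (NN - i.+1)%N; lia.
have [-> -> -> -> ->] : [/\ 1 <= i.+1 < NN.+1, 1 <= NN.+1 - i.+1 < NN.+1,
    NN.+1 - i.+1 = j.+1, NN - j.+1 = i & NN - i.+1 = j]%N by split; lia.
by rewrite /= -scalerDl -mulrDl (Ecoef_dual HK hj).
Qed.

Lemma F_q i : (i <= NN)%N -> comm F (q i) = (NN - i)%:R *: q i.+1.
Proof.
move=> hi; rewrite elF_quad (quad_comm_q Hq zw wz) //; last by move=> k /andP[]; lia.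
rewrite (@sum_nat_single _ _ _ i.+1) ?(@sum_nat_single _ _ _ (NN - i)%N);
  try by move=> k /andP[? ?] ?; apply: scale_heis_off; lia.
have [-> | ltiN] := eqVneq i NN; first by rewrite subnn !ifF ?scale0r ?addr0 //; lia.
have [j hj] : exists j, (i.+1 + j = NN)%N by exists (NN - i.+1)%N; lia.
have [-> -> -> -> ->] : [/\ 1 <= i.+1 < NN.+1, 1 <= NN - i < NN.+1,
    NN - i = j.+1, NN - j.+1 = i & NN - i.+1 = j]%N by split; lia.
by rewrite /= -scalerDl -mulrDl (Fcoef_dual HK hj).
Qed.

Lemma H_q i : (i <= NN)%N -> comm H (q i) = ((NN)%:R - (2 * i)%:R) *: q i.
Proof.
move=> hi; rewrite elH_quad comm_subl comm_scale1l subr0 comm_scalel.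
rewrite (quad_comm_q Hq zw wz) //; last by move=> k /andP[]; rewrite /N; lia.
rewrite (@sum_nat_single _ _ _ (NN - i)%N) ?(@sum_nat_single _ _ _ i);
  try by move=> k /andP[_ hk] hne; apply: scale_heis_off; move: hk hne hi; rewrite /N; lia.
have [j hj] : exists j, (i + j = NN)%N by exists (NN - i)%N; lia.
have [-> ->] : (NN - i = j /\ NN - j = i)%N by lia.
have [lei | gti] := leqP i m.
- rewrite ifF ?ifT ?add0r ?scalerA ?(Hcoef_low HK hj) //; rewrite /N in hj; lia.
- rewrite ifT ?ifF ?addr0 ?scalerA ?(Hcoef_high HK hj) //; rewrite /N in hj; lia.
Qed.

Lemma EFH_central y : comm y w = 0 -> (forall a, (a <= NN)%N -> comm y (q a) = 0) ->
  [/\ comm y E = 0, comm y F = 0 & comm y H = 0].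
Proof.
move=> yw yq; split.
- by rewrite elE_quad (quad_central (m := m)) // => k /andP[]; lia.
- by rewrite elF_quad (quad_central (m := m)) // => k /andP[]; lia.
rewrite elH_quad comm_subr comm_scale1r subr0 comm_scaler (quad_central (m := m)) ?scaler0 //.
by move=> k /andP[]; rewrite /N; lia.
Qed.

Lemma w_comm_EFH : [/\ comm E w = 0, comm F w = 0 & comm H w = 0].
Proof.
have ww : comm w w = 0 by rewrite /comm subrr.
have [wE wF wH] := EFH_central ww (w_comm_q Hq zw wz).
by split; rewrite commN ?wE ?wF ?wH oppr0.
Qed.

(* [H, E] = 2E and [H, F] = -2F: the ad H-weights of the factors add up to
   2 in each term of E and to -2 in each term of F. *)
Lemma HE : comm H E = E *+ 2.
Proof.
have [_ _ Hw] := w_comm_EFH.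
rewrite -scaler_nat {1}elE_quad (quad_eigen (mu := 2%:R) _ Hw H_q) // => k /andP[h1 h2].
split; try lia.
rewrite weight_sum /N (_ : k.-1 + ((2 * m).+1 - k) = 2 * m)%N; last by move: h2; rewrite /N; lia.
by rewrite natrM -natr1; ring.
Qed.

Lemma HF : comm H F = - (F *+ 2).
Proof.
have [_ _ Hw] := w_comm_EFH.
rewrite -scaler_nat -scaleNr {1}elF_quad (quad_eigen (mu := - 2%:R) _ Hw H_q) // => k /andP[h1 h2].
split; try lia.
by rewrite weight_sum (_ : k + (NN - k).+1 = NN.+1)%N -?natr1; [ring | lia].
Qed.

Lemma EF_expand :
  comm E F = w * \sum_(0 <= i < NN.+1) EFcoef K m i *: (q i * q (NN - i)%N).
Proof.
have [Ew _ _] := w_comm_EFH.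
rewrite {1}elF_quad (quad_derivation (phi := fun a => a%:R *: q a.-1) _ Ew E_q);
  last by move=> k /andP[]; lia.
rewrite -sum_shift_collect; congr (_ * _); apply: eq_big_nat => -[|k] // /andP[_ hk].
rewrite /= (_ : NN - k = (NN - k.+1).+1)%N; last by lia.
by rewrite scalerDr -scalerAl -scalerAr !scalerA.
Qed.

Lemma quad_symmetrize (d : nat -> K) :
  w * \sum_(0 <= i < NN.+1) d i *: (q i * q (NN - i)%N) =
  w * \sum_(0 <= k < m.+1) (d k + d (NN - k)%N) *: (q (NN - k)%N * q k)
  + (\sum_(0 <= k < m.+1) d k * heis_c K m k (NN - k)) *: 1.
Proof.
rewrite (@big_cat_nat _ _ _ m.+1) //=; last by rewrite /N; lia.
rewrite sum_upper_half -big_split /= -wz scalerAr -mulrDr scaler_suml -big_split /=.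
congr (_ * _); apply: eq_big_nat => k /andP[_ hk].
have hkN : (k <= NN /\ NN - k <= NN /\ NN - (NN - k) = k)%N by rewrite /N; lia.
case: hkN => hk1 [hk2 ->].
have := Hq.2 k (NN - k)%N hk1 hk2; rewrite /comm => /eqP; rewrite subr_eq => /eqP ->.
by rewrite scalerDl !scalerDr scalerA -addrA addrC.
Qed.

Lemma EF : comm E F = H.
Proof.
rewrite EF_expand quad_symmetrize EFcoef_central // elH_quad scaleNr.
congr (_ - _); rewrite /quad scalerAr scaler_sumr; congr (_ * _).
apply: eq_big_nat => k /andP[_ hk]; rewrite scalerA EFcoef_pair //.
by rewrite /N; lia.
Qed.

Lemma g_rel_EHF : g_rel m E H F q z.
Proof.
have zw0 : comm z w = 0 by rewrite /comm zw wz subrr.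
have [zE zF zH] := EFH_central zw0 Hq.1.
split=> //; split; first exact: HE; split; first exact: HF; split; first exact: EF.
do 3 (split=> //); move=> k hk.
by split; [exact: H_q | split; [exact: E_q | exact: F_q]].
Qed.
End Realization.

Theorem theorem1 (K : fieldType) (HK : [pchar K] =i pred0) (m : nat)
  (U : algType K) (eU hU fU : U) (pU : nat -> U) (zU : U)
  (V : algType K) (pV : nat -> V) (zV : V)
  (L : algType K) (j : V -> L) (iota : V -> U) (winv : L) :
  is_Ug m eU hU fU pU zU ->
  is_UH m pV zV ->
  is_loc zV j ->
  (* iota : U(H) -> U(g) is the algebra map induced by the inclusion H ⊂ g *)
  alg_hom iota -> iota zV = zU -> (forall k, (k <= N m)%N -> iota (pV k) = pU k) ->
  inv_of (j zV) winv ->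
  let q := fun k => j (pV k) in
  exists Phi : U -> L,
    (alg_hom Phi /\ (forall x, Phi (iota x) = j x) /\
     Phi eU = elE m q winv /\ Phi fU = elF m q winv /\ Phi hU = elH m q winv) /\
    (forall Psi : U -> L,
       alg_hom Psi -> (forall x, Psi (iota x) = j x) ->
       Psi eU = elE m q winv -> Psi fU = elF m q winv -> Psi hU = elH m q winv ->
       forall y, Psi y = Phi y).
Proof.
move=> [_ univU] [hV univV] [hj _] hiota iota_z iota_p [zw wz] q.
have Hq : heis_rel m q (j zV) := heis_rel_map hj hV.
(* Phi exists by the universal property of U(g~^(l)) ... *)
have [[Phi [hPhi [PhiE [PhiH [PhiF [Phiz Phip]]]]]] uniqU] :=
  univU L _ _ _ _ _ (g_rel_EHF HK Hq zw wz).
(* ... and restricts to j on U(H~^(l)) by uniqueness in U(H~^(l)). *)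
have PhiI x : Phi (iota x) = j x.
  apply: (univV L q (j zV) Hq).2 (alg_hom_comp hiota hPhi) hj _ _ x.
  - by rewrite /= iota_z Phiz.
  - by move=> k hk /=; rewrite iota_p // Phip.
exists Phi; split; first by do 4 (split=> //).
move=> Psi hPsi PsiI PsiE PsiF PsiH.
apply: (uniqU Psi Phi hPsi hPhi); rewrite ?PhiE ?PhiH ?PhiF ?Phiz //.
- by rewrite -iota_z PsiI.
- by move=> k hk; rewrite -iota_p // PsiI PhiI.
Qed.
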